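(* Let $p\ge2$ be an integer and $\eta>-1$. (1) If $\eta\ge -\frac{p-1}{p}$, then $\tau_\ell(s)\le\pi$ for every $s\in[-1,1]$. (2) If $-1<\eta<-\frac{p-1}{p}$, then $\tau_\ell(s)\ge\pi$ for all $s$ with $\frac{p-1}{p|\eta|}\le|s|\le 1$, and $\tau_\ell(s)<\pi$ for all $s$ with $|s|<\frac{p-1}{p|\eta|}$.
   Context: For an integer $p\ge 2$ and a real parameter $\eta>-1$, define for $\tau\ge 0$ and $s\in[-1,1]$ $$\ell_-(\tau,s)=\cos\tau\,\sin\!\Big(\tau\eta s-\tfrac{\pi}{p}\Big)+s\sin\tau\,\cos\!\Big(\tau\eta s-\tfrac{\pi}{p}\Big),\qquad \ell_+(\tau,s)=\cos\tau\,\sin\!\Big(\tau\eta s+\tfrac{\pi}{p}\Big)+s\sin\tau\,\cos\!\Big(\tau\eta s+\tfrac{\pi}{p}\Big).$$ Let $\tau_\ell^-(s)$ (resp. $\tau_\ell^+(s)$) be the smallest positive root in $\tau$ of $\ell_-(\tau,s)=0$ (resp. $\ell_+(\tau,s)=0$), and $\tau_\ell(s)=\min(\tau_\ell^-(s),\tau_\ell^+(s))$. *)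

From Stdlib Require Import Reals.
From Coquelicot Require Import Coquelicot.
Open Scope R_scope.

Definition ell_minus (p : nat) (eta tau s : R) : R :=
  cos tau * sin (tau * eta * s - PI / INR p)
  + s * sin tau * cos (tau * eta * s - PI / INR p).

Definition ell_plus (p : nat) (eta tau s : R) : R :=
  cos tau * sin (tau * eta * s + PI / INR p)
  + s * sin tau * cos (tau * eta * s + PI / INR p).

(* Smallest positive root of f, as the infimum (in the extended reals) of the
   set of positive roots; it is p_infty when there is no positive root.
   Since the root set is closed and f(0) <> 0 here, the infimum is attained,
   i.e. it is the smallest positive root whenever one exists. *)
Definition first_pos_root (f : R -> R) : Rbar :=
  Glb_Rbar (fun t => 0 < t /\ f t = 0).

Definition tau_l_minus (p : nat) (eta s : R) : Rbar :=
  first_pos_root (fun t => ell_minus p eta t s).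
Definition tau_l_plus (p : nat) (eta s : R) : Rbar :=
  first_pos_root (fun t => ell_plus p eta t s).
Definition tau_l (p : nat) (eta s : R) : Rbar :=
  Rbar_min (tau_l_minus p eta s) (tau_l_plus p eta s).

From Stdlib Require Import Reals Lra Psatz.
From Coquelicot Require Import Coquelicot.
Open Scope R_scope.

(* On (0, PI), with a = eta s > -s and c = -+PI/p, the function
   cos t sin (a t + c) + s sin t cos (a t + c) equals a positive amplitude times
   cos (h t), where the phase h t = a t + c - atan (cot t / s) has derivative
   a + s / (s^2 sin^2 t + cos^2 t) >= a + s > 0.  Hence h increases from c - PI/2
   to a PI + c + PI/2.  When eta s <= -(p-1)/p the phase of ell_- stays in
   (-3PI/2, -PI/2) and that of ell_+ in (-PI/2, PI/2), so neither vanishes on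
   (0, PI).  Otherwise ell_-(0) = -sin (PI/p) < 0 and ell_- is positive at PI,
   PI/2 or PI/(p eta s) depending on the size of eta s, so it has a root in
   (0, PI).  Finally tau_l is even in s. *)

Definition ell (a c s t : R) : R :=
  cos t * sin (a * t + c) + s * sin t * cos (a * t + c).

Lemma ell_minusE p eta t s :
  ell_minus p eta t s = ell (eta * s) (- (PI / INR p)) s t.
Proof.
  unfold ell_minus, ell.
  replace (eta * s * t + - (PI / INR p)) with (t * eta * s - PI / INR p) by ring.
  reflexivity.
Qed.

Lemma ell_plusE p eta t s : ell_plus p eta t s = ell (eta * s) (PI / INR p) s t.
Proof.
  unfold ell_plus, ell.
  replace (eta * s * t + PI / INR p) with (t * eta * s + PI / INR p) by ring.
  reflexivity.
Qed.

Lemma ell_continuous a c s : continuity (ell a c s).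
Proof. unfold ell; reg. Qed.

Lemma ell_shift_PI a c s t : ell a (c + PI) s t = - ell a c s t.
Proof. unfold ell. rewrite <- Rplus_assoc, neg_sin, neg_cos. ring. Qed.

Lemma ell_PI a c s : ell a c s PI = - sin (a * PI + c).
Proof. unfold ell. rewrite cos_PI, sin_PI. ring. Qed.

Definition phase (a c s t : R) : R := a * t + c - atan (cos t / (s * sin t)).

Lemma ell_phase a c s t : 0 < s -> 0 < sin t ->
  ell a c s t = s * sin t * sqrt (1 + (cos t / (s * sin t))²) * cos (phase a c s t).
Proof.
  intros Hs Hsin. unfold ell, phase.
  rewrite cos_minus, cos_atan, sin_atan.
  assert (0 < sqrt (1 + (cos t / (s * sin t))²)).
  { apply sqrt_lt_R0. pose proof (Rle_0_sqr (cos t / (s * sin t))). lra. }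
  field. split; lra.
Qed.

Lemma sin2_plus_cos2 t : sin t ^ 2 + cos t ^ 2 = 1.
Proof. rewrite <- (sin2_cos2 t). unfold Rsqr. ring. Qed.

Lemma phase_derive a c s t : 0 < s -> sin t <> 0 ->
  is_derive (phase a c s) t (a + s / (s ^ 2 * sin t ^ 2 + cos t ^ 2)).
Proof.
  intros Hs Hsin. unfold phase.
  assert (HD : 0 < s ^ 2 * sin t ^ 2 + cos t ^ 2).
  { assert (0 < sin t * sin t) by (apply Rsqr_pos_lt; auto).
    assert (0 < s * s * (sin t * sin t)) by (apply Rmult_lt_0_compat; nra).
    pose proof (Rle_0_sqr (cos t)). unfold Rsqr in *. simpl. nra. }
  auto_derive.
  - intro H. apply Hsin. nra.
  - pose proof (sin2_plus_cos2 t) as Hsc.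
    set (Sn := sin t) in *. set (Cn := cos t) in *.
    replace (1 + Cn * / (s * Sn) * (Cn * / (s * Sn) * 1))
      with ((s ^ 2 * Sn ^ 2 + Cn ^ 2) / (s * Sn) ^ 2) by (field; lra).
    field_simplify_eq.
    + replace (Cn ^ 2) with (1 - Sn ^ 2) by lra. ring.
    + split; [|split; lra]. replace ((s * Sn) ^ 2) with (s ^ 2 * Sn ^ 2) by ring. lra.
Qed.

Lemma phase_slope_ge a s t : 0 < s <= 1 ->
  a + s <= a + s / (s ^ 2 * sin t ^ 2 + cos t ^ 2).
Proof.
  intros Hs. pose proof (sin2_plus_cos2 t) as Hsc.
  assert (Hs2 : 0 < s ^ 2 <= 1) by (simpl; split; nra).
  assert (Hsin2 : 0 <= sin t ^ 2) by (simpl; nra).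
  assert (Hcos2 : 0 <= cos t ^ 2) by (simpl; nra).
  set (D := s ^ 2 * sin t ^ 2 + cos t ^ 2).
  assert (HD : s ^ 2 <= D <= 1) by (unfold D; split; nra).
  cut (s <= s / D); [lra|].
  apply (Rmult_le_reg_r D); [lra|]. field_simplify; nra.
Qed.

Lemma phase_increasing a c s x y : 0 < s <= 1 -> 0 < a + s ->
  0 < x -> x < y -> y < PI -> phase a c s x < phase a c s y.
Proof.
  intros Hs Has Hx Hxy Hy.
  destruct (MVT_cor2 (phase a c s)
              (fun t => a + s / (s ^ 2 * sin t ^ 2 + cos t ^ 2)) x y Hxy)
    as [z [Heq Hz]].
  - intros z Hz. apply is_derive_Reals, phase_derive; [lra|].
    apply Rgt_not_eq, sin_gt_0; lra.
  - pose proof (phase_slope_ge a s z Hs). nra.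
Qed.

Lemma le_of_forall_lt_add_mul x y a t : 0 < t ->
  (forall u, 0 < u < t -> x < y + a * u) -> x <= y.
Proof.
  intros Ht H. apply Rnot_lt_le. intros Hyx.
  pose proof (Rabs_pos a). pose proof (Rle_abs a).
  set (u := Rmin (t / 2) ((x - y) / (Rabs a + 1))).
  assert (Hu : 0 < u < t).
  { unfold u. split; [apply Rmin_glb_lt; [lra|apply Rdiv_lt_0_compat; lra]|].
    pose proof (Rmin_l (t / 2) ((x - y) / (Rabs a + 1))). lra. }
  assert (Hau : a * u < x - y).
  { assert (u * (Rabs a + 1) <= x - y).
    { pose proof (Rmin_r (t / 2) ((x - y) / (Rabs a + 1))) as Hr. fold u in Hr.
      apply (Rmult_le_compat_r (Rabs a + 1)) in Hr; [|lra].
      field_simplify in Hr; lra. }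
    nra. }
  specialize (H u Hu). lra.
Qed.

Lemma phase_bounds a c s t : 0 < s <= 1 -> 0 < a + s -> 0 < t < PI ->
  c - PI / 2 < phase a c s t < a * PI + c + PI / 2.
Proof.
  intros Hs Has Ht.
  assert (Hatan : forall u, - PI / 2 < atan (cos u / (s * sin u)) < PI / 2)
    by (intros; apply atan_bound).
  (* |atan| < PI/2 bounds the phase at u by a u + c -+ PI/2; monotonicity and
     letting u tend to 0 (resp. PI) remove the term a u. *)
  split.
  - apply Rle_lt_trans with (phase a c s (t / 2)); [|apply phase_increasing; lra].
    apply (le_of_forall_lt_add_mul _ _ (- a) (t / 2)); [lra|].
    intros u Hu. pose proof (phase_increasing a c s u (t / 2) Hs Has).
    specialize (Hatan u). unfold phase in *. lra.
  - set (m := (t + PI) / 2).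
    apply Rlt_le_trans with (phase a c s m); [apply phase_increasing; unfold m; lra|].
    apply (le_of_forall_lt_add_mul _ _ (- a) (PI - m)); [unfold m; lra|].
    intros u Hu. pose proof (phase_increasing a c s m (PI - u) Hs Has).
    specialize (Hatan (PI - u)). unfold phase, m in *. lra.
Qed.

Lemma ell_pos a c s t : 0 < s <= 1 -> 0 < a + s -> 0 <= c -> a * PI + c <= 0 ->
  0 < t < PI -> 0 < ell a c s t.
Proof.
  intros Hs Has Hc Hac Ht.
  assert (Hsin : 0 < sin t) by (apply sin_gt_0; lra).
  rewrite ell_phase by lra.
  assert (0 < sqrt (1 + (cos t / (s * sin t))²)).
  { apply sqrt_lt_R0. pose proof (Rle_0_sqr (cos t / (s * sin t))). lra. }
  pose proof (phase_bounds a c s t Hs Has Ht).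
  assert (0 < cos (phase a c s t)) by (apply cos_gt_0; lra).
  apply Rmult_lt_0_compat; [|lra].
  apply Rmult_lt_0_compat; [nra|lra].
Qed.

Lemma ell_neg a c s t : 0 < s <= 1 -> 0 < a + s -> - PI <= c -> a * PI + c <= - PI ->
  0 < t < PI -> ell a c s t < 0.
Proof.
  intros. rewrite <- (Ropp_involutive (ell a c s t)), <- ell_shift_PI.
  pose proof (ell_pos a (c + PI) s t). lra.
Qed.

Lemma ell_pos_somewhere a P s : 0 < s -> 0 < P <= PI / 2 -> P - PI < a * PI ->
  exists y, 0 < y <= PI /\ 0 < ell a (- P) s y.
Proof.
  intros Hs HP HaP. pose proof PI_RGT_0.
  destruct (Rle_or_lt a 0) as [Ha0|Ha0]; [|destruct (Rle_or_lt a 1) as [Ha1|Ha1]].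
  - exists PI. split; [lra|]. rewrite ell_PI.
    replace (a * PI + - P) with (- (P - a * PI)) by ring.
    rewrite sin_neg, Ropp_involutive. apply sin_gt_0; nra.
  - exists (PI / 2). split; [lra|]. unfold ell. rewrite cos_PI2, sin_PI2.
    assert (0 < cos (a * (PI / 2) + - P)) by (apply cos_gt_0; nra). nra.
  - exists (P / a).
    assert (Hy : 0 < P / a < P).
    { split; [apply Rdiv_lt_0_compat; lra|].
      apply (Rmult_lt_reg_r a); [lra|]. field_simplify; nra. }
    split; [lra|]. unfold ell.
    replace (a * (P / a) + - P) with 0 by (field; lra).
    rewrite sin_0, cos_0. assert (0 < sin (P / a)) by (apply sin_gt_0; lra). nra.
Qed.

Lemma IVT_strict f x y : continuity f -> x < y -> f x < 0 -> 0 < f y ->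
  exists z, x < z < y /\ f z = 0.
Proof.
  intros Hc Hxy Hx Hy. destruct (IVT f x y Hc Hxy Hx Hy) as [z [Hz Hfz]].
  exists z. split; [|exact Hfz].
  split; [destruct (Req_dec x z)|destruct (Req_dec z y)]; subst; lra.
Qed.

Lemma ell_root_lt_PI a P s : 0 < s -> 0 < P <= PI / 2 -> P - PI < a * PI ->
  exists t, 0 < t < PI /\ ell a (- P) s t = 0.
Proof.
  intros Hs HP HaP.
  destruct (ell_pos_somewhere a P s Hs HP HaP) as [y [Hy Hely]].
  assert (Hel0 : ell a (- P) s 0 < 0).
  { unfold ell. rewrite sin_0, cos_0, Rmult_0_r, Rplus_0_l, sin_neg.
    assert (0 < sin P) by (apply sin_gt_0; lra). lra. }
  destruct (IVT_strict _ 0 y (ell_continuous a (- P) s) ltac:(lra) Hel0 Hely)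
    as [z [Hz Hzr]].
  exists z. split; [lra|exact Hzr].
Qed.

Lemma first_pos_root_le f t : 0 < t -> f t = 0 -> Rbar_le (first_pos_root f) t.
Proof. intros Ht Hft. apply (proj1 (Glb_Rbar_correct _)). auto. Qed.

Lemma first_pos_root_ge f x : (forall t, 0 < t < x -> f t <> 0) ->
  Rbar_le x (first_pos_root f).
Proof.
  intros H. apply (proj2 (Glb_Rbar_correct _)). intros t [Ht Hft]. simpl.
  destruct (Rlt_or_le t x) as [Htx|]; [|assumption].
  exfalso. exact (H t (conj Ht Htx) Hft).
Qed.

Lemma tau_l_le_root p eta s t : 0 < t -> ell_minus p eta t s = 0 ->
  Rbar_le (tau_l p eta s) t.
Proof.
  intros. eapply Rbar_le_trans; [apply Rbar_min_l|].
  now apply first_pos_root_le.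
Qed.

Lemma tau_l_ge p eta s x :
  (forall t, 0 < t < x -> ell_minus p eta t s <> 0 /\ ell_plus p eta t s <> 0) ->
  Rbar_le x (tau_l p eta s).
Proof.
  intros H. unfold tau_l. apply Rbar_min_case; apply first_pos_root_ge; intros t Ht; apply H, Ht.
Qed.

Lemma tau_l_opp p eta s : tau_l p eta (- s) = tau_l p eta s.
Proof.
  assert (Hm : forall t, ell_minus p eta t (- s) = - ell_plus p eta t s).
  { intros t. unfold ell_minus, ell_plus.
    replace (t * eta * - s - PI / INR p) with (- (t * eta * s + PI / INR p)) by ring.
    rewrite sin_neg, cos_neg. ring. }
  assert (Hp : forall t, ell_plus p eta t (- s) = - ell_minus p eta t s).
  { intros t. unfold ell_minus, ell_plus.
    replace (t * eta * - s + PI / INR p) with (- (t * eta * s - PI / INR p)) by ring.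
    rewrite sin_neg, cos_neg. ring. }
  unfold tau_l, tau_l_minus, tau_l_plus, first_pos_root.
  rewrite Rbar_min_comm. f_equal; apply Glb_Rbar_eqset; intros t;
    [rewrite Hp|rewrite Hm]; split; intros [? ?]; split; lra.
Qed.

Lemma tau_l_Rabs p eta s : tau_l p eta (Rabs s) = tau_l p eta s.
Proof.
  destruct (Rle_or_lt 0 s).
  - now rewrite Rabs_right by lra.
  - now rewrite Rabs_left, tau_l_opp by lra.
Qed.

Lemma PI_div_bounds p : (2 <= p)%nat -> 0 < PI / INR p <= PI / 2.
Proof.
  intros Hp. apply le_INR in Hp. simpl in Hp. pose proof PI_RGT_0. split.
  - apply Rdiv_lt_0_compat; lra.
  - apply Rmult_le_compat_l; [lra|]. apply Rinv_le_contravar; lra.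
Qed.

Lemma critical_ratio_mul_PI p : (2 <= p)%nat ->
  - (INR p - 1) / INR p * PI = PI / INR p - PI.
Proof. intros Hp. apply le_INR in Hp. simpl in Hp. field. lra. Qed.

Lemma tau_l_lt_PI p eta s : (2 <= p)%nat -> 0 <= s ->
  - (INR p - 1) / INR p < eta * s -> Rbar_lt (tau_l p eta s) PI.
Proof.
  intros Hp Hs Hcrit. pose proof PI_RGT_0.
  destruct (Req_dec s 0) as [->|Hs0].
  - eapply Rbar_le_lt_trans; [apply (tau_l_le_root p eta 0 (PI / 2))|]; simpl; try lra.
    unfold ell_minus. rewrite cos_PI2. ring.
  - apply (Rmult_lt_compat_r PI) in Hcrit; [|lra].
    rewrite critical_ratio_mul_PI in Hcrit by assumption.
    destruct (ell_root_lt_PI (eta * s) (PI / INR p) s) as [t [Ht Hroot]];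
      [lra|apply PI_div_bounds, Hp|lra|].
    eapply Rbar_le_lt_trans; [apply (tau_l_le_root p eta s t)|]; simpl; try lra.
    now rewrite ell_minusE.
Qed.

Lemma tau_l_le_PI p eta s : (2 <= p)%nat -> 0 <= s ->
  - (INR p - 1) / INR p <= eta * s -> Rbar_le (tau_l p eta s) PI.
Proof.
  intros Hp Hs [Hcrit|Hcrit].
  - now apply Rbar_lt_le, tau_l_lt_PI.
  - apply tau_l_le_root; [apply PI_RGT_0|].
    rewrite ell_minusE, ell_PI, <- Hcrit, critical_ratio_mul_PI by assumption.
    replace (PI / INR p - PI + - (PI / INR p)) with (- PI) by ring.
    rewrite sin_neg, sin_PI. ring.
Qed.

Lemma tau_l_ge_PI p eta s : (2 <= p)%nat -> -1 < eta -> 0 < s <= 1 ->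
  eta * s <= - (INR p - 1) / INR p -> Rbar_le PI (tau_l p eta s).
Proof.
  intros Hp Heta Hs Hcrit. pose proof (PI_div_bounds p Hp). pose proof PI_RGT_0.
  apply (Rmult_le_compat_r PI) in Hcrit; [|lra].
  rewrite critical_ratio_mul_PI in Hcrit by assumption.
  assert (Has : 0 < eta * s + s) by nra.
  apply tau_l_ge. intros t Ht. rewrite ell_minusE, ell_plusE. split.
  - apply Rlt_not_eq, ell_neg; lra.
  - apply Rgt_not_eq, ell_pos; lra.
Qed.

Theorem mainTheorem3 (p : nat) (eta : R) :
  (2 <= p)%nat -> -1 < eta ->
  (eta >= - (INR p - 1) / INR p ->
     forall s, -1 <= s <= 1 -> Rbar_le (tau_l p eta s) (Finite PI))
  /\
  (eta < - (INR p - 1) / INR p ->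
     (forall s, (INR p - 1) / (INR p * Rabs eta) <= Rabs s <= 1 ->
        Rbar_le (Finite PI) (tau_l p eta s))
     /\
     (forall s, Rabs s < (INR p - 1) / (INR p * Rabs eta) ->
        Rbar_lt (tau_l p eta s) (Finite PI))).
Proof.
  intros Hp Heta. pose proof (le_INR _ _ Hp) as Hn. simpl in Hn.
  assert (Hq : - (INR p - 1) / INR p < 0).
  { unfold Rdiv. rewrite Ropp_mult_distr_l_reverse.
    apply Ropp_lt_gt_0_contravar, Rdiv_lt_0_compat; lra. }
  set (q := - (INR p - 1) / INR p) in *.
  split.
  - intros Hge s Hs. rewrite <- tau_l_Rabs.
    assert (Habs : Rabs s <= 1) by (apply Rabs_le; lra).
    pose proof (Rabs_pos s).
    apply tau_l_le_PI; [assumption..|]. fold q.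
    destruct (Rle_or_lt 0 eta).
    + assert (0 <= eta * Rabs s) by (apply Rmult_le_pos; assumption). lra.
    + assert (0 <= - eta * (1 - Rabs s)) by (apply Rmult_le_pos; lra). lra.
  - intros Hlt. assert (Heta0 : eta < 0) by lra.
    rewrite (Rabs_left eta Heta0).
    assert (Hth : (INR p - 1) / (INR p * - eta) * eta = q) by (unfold q; field; lra).
    set (th := (INR p - 1) / (INR p * - eta)) in *.
    split; intros s Hs; rewrite <- tau_l_Rabs.
    + apply tau_l_ge_PI; [assumption..| |]; fold q; nra.
    + apply tau_l_lt_PI; [assumption|apply Rabs_pos|fold q; nra].
Qed.
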